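(* Let $(\gamma,\nu):I\to\mathbb{R}^2\times S^1$ be a Legendre curve with curvature $(\ell,\beta)$, $\gamma=(x,z)$, $\nu=(a,b)$, and $\lambda\neq0$ a constant; for a plane curve $\eta=(X,Z)$ on $I$ write $r[\eta](u,v)=(X(u)\cos v,X(u)\sin v,Z(u)+\lambda v)$. Let $(k_1,k_2):I\to\mathbb{R}^2$ be smooth with $k_1^2+k_2^2=1$ and $-k_1x+k_2b\lambda=0$, let $\tilde t\neq0$, and let $$r[\gamma]^{\tilde t}(u,v)=\big((x+\tilde tk_2a)\cos v+\tilde tk_1\sin v,\ (x+\tilde tk_2a)\sin v-\tilde tk_1\cos v,\ z+\lambda v+\tilde tk_2b\big)$$ (the parallel surface of $r[\gamma]$ along $\mathbf n=(k_2a\cos v+k_1\sin v,k_2a\sin v-k_1\cos v,k_2b)$). Suppose $A,\theta:I\to\mathbb{R}$ are smooth with $x+\tilde tk_2a=A\cos\theta$, $\tilde tk_1=A\sin\theta$. Let $(\ell_1,\ell_2):I\to\mathbb{R}^2$ be smooth with $\ell_1^2+\ell_2^2=1$ and $\ell_1b\lambda+\ell_2xa=0$, let $t\ne0$, and suppose $B,\tau:I\to\mathbb{R}$ are smooth with $x-t\ell_1=B\cos\tau$, $-t\ell_2=B\sin\tau$. Put $\tilde\gamma(u)=(B(u),z(u)-\lambda\tau(u))$. If $r[\gamma]^{\tilde t}(u,v)=r[\tilde\gamma](u,v)$ for all $(u,v)\in I\times\mathbb{R}$, then $x$ is constant and $\gamma$ is a part of a line.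
   Context: A Legendre curve is a smooth $(\gamma,\nu):I\to\mathbb{R}^2\times S^1$ with $\dot\gamma\cdot\nu=0$; with $\mu=J\nu$ ($J$ anticlockwise rotation by $\pi/2$) its curvature is $(\ell,\beta)$, $\ell=\dot\nu\cdot\mu$, $\beta=\dot\gamma\cdot\mu$, so that $\dot x=-\beta b$, $\dot z=\beta a$, $\dot a=-\ell b$, $\dot b=\ell a$, $a^2+b^2=1$. (Here $B,\tau$ are such that $s+t\nu^s$ is the slice curve of $r[\tilde\gamma]$, where $s=(x\cos\frac z\lambda,-x\sin\frac z\lambda)$ and $\nu^s=(-\ell_2\sin\frac z\lambda-\ell_1\cos\frac z\lambda,-\ell_2\cos\frac z\lambda+\ell_1\sin\frac z\lambda)$.) *)

From Stdlib Require Import Reals.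
From Coquelicot Require Import Coquelicot.
Open Scope R_scope.

Definition in_interval (lo hi : Rbar) (u : R) : Prop :=
  Rbar_lt lo u /\ Rbar_lt u hi.

Definition smooth_on (lo hi : Rbar) (f : R -> R) : Prop :=
  forall (n : nat) (u : R), in_interval lo hi u -> ex_derive (Derive_n f n) u.

Definition legendre_curve (lo hi : Rbar) (x z a b : R -> R) : Prop :=
  smooth_on lo hi x /\ smooth_on lo hi z /\
  smooth_on lo hi a /\ smooth_on lo hi b /\
  (forall u, in_interval lo hi u ->
     a u ^ 2 + b u ^ 2 = 1 /\ Derive x u * a u + Derive z u * b u = 0).

Definition helicoidal (lambda : R) (X Z : R -> R) (u v : R) : R * R * R :=
  (X u * cos v, X u * sin v, Z u + lambda * v).

Definition parallel_surface (lambda tt : R) (x z a b k1 k2 : R -> R)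
    (u v : R) : R * R * R :=
  ((x u + tt * k2 u * a u) * cos v + tt * k1 u * sin v,
   (x u + tt * k2 u * a u) * sin v - tt * k1 u * cos v,
   z u + lambda * v + tt * k2 u * b u).

Definition part_of_line (lo hi : Rbar) (x z : R -> R) : Prop :=
  exists p1 p2 d1 d2 : R, (d1 <> 0 \/ d2 <> 0) /\
    forall u, in_interval lo hi u ->
      exists s : R, x u = p1 + s * d1 /\ z u = p2 + s * d2.

(** At [v = 0] the second coordinates of the two surfaces are [- tt k1] and [0],
    so [k1 = 0]; then [k2 = ±1] and the constraint [- k1 x + k2 b lambda = 0]
    forces [b = 0], hence [a = ±1].  The Legendre condition [x' a + z' b = 0]
    now reads [x' = 0], so [x] is constant and [gamma] runs along a vertical line. *)

From Stdlib Require Import Reals Lra Classical.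
From Coquelicot Require Import Coquelicot.
Open Scope R_scope.

Lemma in_interval_between (lo hi : Rbar) (u1 u2 w : R) :
  in_interval lo hi u1 -> in_interval lo hi u2 ->
  Rmin u1 u2 <= w <= Rmax u1 u2 -> in_interval lo hi w.
Proof.
  intros H1 H2 [Hmin Hmax].
  assert (Hm : in_interval lo hi (Rmin u1 u2))
    by (unfold Rmin; destruct (Rle_dec u1 u2); assumption).
  assert (HM : in_interval lo hi (Rmax u1 u2))
    by (unfold Rmax; destruct (Rle_dec u1 u2); assumption).
  split.
  - apply Rbar_lt_le_trans with (Finite (Rmin u1 u2)); [apply Hm | simpl; lra].
  - apply Rbar_le_lt_trans with (Finite (Rmax u1 u2)); [simpl; lra | apply HM].
Qed.

Lemma constant_on_interval_of_Derive_0 (lo hi : Rbar) (f : R -> R) :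
  (forall u, in_interval lo hi u -> ex_derive f u /\ Derive f u = 0) ->
  exists c : R, forall u, in_interval lo hi u -> f u = c.
Proof.
  intros Hf.
  destruct (classic (exists u0, in_interval lo hi u0)) as [[u0 Hu0] | Hempty].
  2: { exists 0. intros u Hu. exfalso. apply Hempty. now exists u. }
  exists (f u0). intros u Hu.
  assert (Hbetween : forall w, Rmin u0 u <= w <= Rmax u0 u -> in_interval lo hi w)
    by (intros w Hw; now apply (in_interval_between lo hi u0 u)).
  destruct (MVT_gen f u0 u (fun _ => 0)) as [c [_ Hc]].
  - intros w Hw. destruct (Hf w (Hbetween w ltac:(lra))) as [Hd H0].
    rewrite <- H0. now apply Derive_correct.
  - intros w Hw. destruct (Hf w (Hbetween w Hw)) as [Hd _].
    apply continuity_pt_filterlim. exact (ex_derive_continuous f w Hd).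
  - lra.
Qed.

Lemma parallel_surface_eq_helicoidal_k1_0 (lambda tt : R)
    (x z a b k1 k2 X Z : R -> R) (u : R) :
  tt <> 0 ->
  parallel_surface lambda tt x z a b k1 k2 u 0 = helicoidal lambda X Z u 0 ->
  k1 u = 0.
Proof.
  intros Htt E. unfold parallel_surface, helicoidal in E.
  rewrite cos_0, sin_0 in E. injection E as _ E2 _.
  apply (Rmult_eq_reg_l tt); [lra | exact Htt].
Qed.

Lemma unit_normal_horizontal (lambda k1 k2 x b : R) :
  lambda <> 0 -> k1 = 0 -> k1 ^ 2 + k2 ^ 2 = 1 ->
  - k1 * x + k2 * b * lambda = 0 -> b = 0.
Proof.
  intros Hlam -> Hk Hc.
  assert (Hk2 : k2 <> 0) by (intros ->; lra).
  apply (Rmult_eq_reg_l (k2 * lambda)); [lra | now apply Rmult_integral_contrapositive].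
Qed.

Lemma Legendre_horizontal_normal_Derive_0 (x' z' a b : R) :
  a ^ 2 + b ^ 2 = 1 -> x' * a + z' * b = 0 -> b = 0 -> x' = 0.
Proof.
  intros Hab Hleg ->.
  assert (Ha : a <> 0) by (intros ->; lra).
  apply (Rmult_eq_reg_r a); [lra | exact Ha].
Qed.

Lemma part_of_line_of_x_constant (lo hi : Rbar) (x z : R -> R) (c : R) :
  (forall u, in_interval lo hi u -> x u = c) -> part_of_line lo hi x z.
Proof.
  intros Hc. exists c, 0, 0, 1. split; [right; lra |].
  intros u Hu. exists (z u). rewrite (Hc u Hu). split; ring.
Qed.

Theorem proposition3p6
  (lo hi : Rbar) (x z a b : R -> R) (lambda : R)
  (k1 k2 : R -> R) (tt : R) (A theta : R -> R)
  (l1 l2 : R -> R) (t : R) (B tau : R -> R) :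
  Rbar_lt lo hi ->
  legendre_curve lo hi x z a b ->
  lambda <> 0 ->
  smooth_on lo hi k1 -> smooth_on lo hi k2 ->
  (forall u, in_interval lo hi u ->
     k1 u ^ 2 + k2 u ^ 2 = 1 /\ - k1 u * x u + k2 u * b u * lambda = 0) ->
  tt <> 0 ->
  smooth_on lo hi A -> smooth_on lo hi theta ->
  (forall u, in_interval lo hi u ->
     x u + tt * k2 u * a u = A u * cos (theta u) /\
     tt * k1 u = A u * sin (theta u)) ->
  smooth_on lo hi l1 -> smooth_on lo hi l2 ->
  (forall u, in_interval lo hi u ->
     l1 u ^ 2 + l2 u ^ 2 = 1 /\ l1 u * b u * lambda + l2 u * x u * a u = 0) ->
  t <> 0 ->
  smooth_on lo hi B -> smooth_on lo hi tau ->
  (forall u, in_interval lo hi u ->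
     x u - t * l1 u = B u * cos (tau u) /\ - t * l2 u = B u * sin (tau u)) ->
  (forall u v, in_interval lo hi u ->
     parallel_surface lambda tt x z a b k1 k2 u v =
     helicoidal lambda B (fun w => z w - lambda * tau w) u v) ->
  (exists c : R, forall u, in_interval lo hi u -> x u = c) /\
  part_of_line lo hi x z.
Proof.
  intros _ [Hx [_ [_ [_ Hleg]]]] Hlam _ _ Hk Htt _ _ _ _ _ _ _ _ _ _ Hsurf.
  assert (Hconst : exists c : R, forall u, in_interval lo hi u -> x u = c).
  { apply constant_on_interval_of_Derive_0. intros u Hu.
    split; [exact (Hx 0%nat u Hu) |].
    destruct (Hk u Hu) as [Hk_unit Hk_orth].
    destruct (Hleg u Hu) as [Hab_unit Hlegendre].
    pose proof (parallel_surface_eq_helicoidal_k1_0 _ _ _ _ _ _ _ _ _ _ u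
                  Htt (Hsurf u 0 Hu)) as Hk1.
    apply (Legendre_horizontal_normal_Derive_0 _ _ _ _ Hab_unit Hlegendre).
    exact (unit_normal_horizontal _ _ _ _ _ Hlam Hk1 Hk_unit Hk_orth).
  }
  split; [exact Hconst |].
  destruct Hconst as [c Hc]. exact (part_of_line_of_x_constant lo hi x z c Hc).
Qed.
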